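(* Let $K,L,A$ be as in the context and suppose the $\lambda_t$ and $\Psi_i$ form an $A$-scaffold on $L$ of tolerance $\mathfrak{T}\ge1$ with shift parameters $b_1,\dots,b_n$. Let $s\in\mathbb{S}_{p^n}$ and $t\in\mathbb{S}_{p^n}(h)$. Let $\Psi$ be any element of $\Upsilon^{(s)}$, and set $\Phi=\pi^{-w(s)}\Psi$. Then: (i) If $s\preceq\mathfrak{a}(t)$, then there is a unit $y_{\Phi,t}\in\mathfrak{O}_K^\times$ such that $$\Phi\cdot\lambda_t\equiv\pi^{\epsilon(s,t)}y_{\Phi,t}\lambda_{H(s,t)}\pmod{\pi^{\epsilon(s,t)}\lambda_{H(s,t)}\mathfrak{P}_L^{\mathfrak{T}}}.$$ In particular, $v_L(\Phi\cdot\lambda_t)=H(s,t)$ if $s\preceq\mathfrak{a}(t)$ and $\epsilon(s,t)=0$, and $v_L(\Phi\cdot\lambda_t)=H(s,t)+p^n$ if $s\preceq\mathfrak{a}(t)$ and $\epsilon(s,t)=1$. (ii) If $s\not\preceq\mathfrak{a}(t)$, then $v_L(\Phi\cdot\lambda_t)\ge H(s,b)+\mathfrak{T}+t-b$.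
   Context: Let $K$ be a field complete with respect to a discrete valuation, with residue field of characteristic $p>0$ (not necessarily perfect). Let $L/K$ be totally ramified of degree $p^n$; $v_K,v_L$ normalized valuations, $\mathfrak{O}_K$, $\mathfrak{P}_L$ as usual; $\pi$ a fixed uniformizer of $K$. Let $A$ be a $K$-algebra with $\dim_K A=p^n$ acting $K$-linearly on $L$. Let $\mathbb{S}_{p^n}=\{0,\dots,p^n-1\}$, $s=\sum_{i=1}^n s_{(n-i)}p^{n-i}$ with digits in $\{0,\dots,p-1\}$, $s\preceq t$ iff $s_{(n-i)}\le t_{(n-i)}$ for all $i$. Given integers $b_1,\dots,b_n$ prime to $p$, $\mathfrak{b}(s)=\sum_i s_{(n-i)}p^{n-i}b_i$; for $t\in\mathbb{Z}$, $\mathfrak{a}(t)\in\mathbb{S}_{p^n}$ is the unique element with $\mathfrak{b}(\mathfrak{a}(t))\equiv-t\pmod{p^n}$. An $A$-scaffold on $L$ of tolerance $\mathfrak{T}\ge1$ (possibly $\infty$) with shift parameters $b_1,\dots,b_n$ consists of: (i) $\lambda_t\in L$ ($t\in\mathbb{Z}$) with $v_L(\lambda_t)=t$ and $\lambda_{t_1}\lambda_{t_2}^{-1}\in K$ whenever $t_1\equiv t_2\pmod{p^n}$; (ii) $\Psi_1,\dots,\Psi_n\in A$ with $\Psi_i\cdot1=0$ such that for each $i,t$ there is $u_{i,t}\in\mathfrak{O}_K^\times$ with $\Psi_i\cdot\lambda_t\equiv u_{i,t}\lambda_{t+p^{n-i}b_i}$ if $\mathfrak{a}(t)_{(n-i)}\ge1$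 and $\equiv0$ if $\mathfrak{a}(t)_{(n-i)}=0$, modulo $\lambda_{t+p^{n-i}b_i}\mathfrak{P}_L^{\mathfrak{T}}$ (equalities if $\mathfrak{T}=\infty$). For $s\in\mathbb{S}_{p^n}$, $\Upsilon^{(s)}$ is the set of monomials (words) in the not necessarily commuting elements $\Psi_1,\dots,\Psi_n$ in which, for each $i$, the exponents of $\Psi_i$ sum to $s_{(n-i)}$. Fix $h\in\mathbb{Z}$, $\mathbb{S}_{p^n}(h)=\{t\in\mathbb{Z}:h\le t<h+p^n\}$, $b\in\mathbb{S}_{p^n}(h)$ the unique element with $\mathfrak{a}(b)=p^n-1$, $r:\mathbb{Z}\to\mathbb{S}_{p^n}$ reduction mod $p^n$. For $s\in\mathbb{S}_{p^n}$, $t\in\mathbb{S}_{p^n}(h)$: $D(s,t)=\lfloor(\mathfrak{b}(s)+t-h)/p^n\rfloor$, $H(s,t)=h+r(\mathfrak{b}(s)+t-h)$, $d(s)=D(s,b)$, $w(s)=\min\{d(u)-d(u-s):u\in\mathbb{S}_{p^n},u\succeq s\}$, and, when $s\preceq\mathfrak{a}(t)$, $\epsilon(s,t)=D(s,t)-w(s)$. *)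

From HB Require Import structures.
From mathcomp Require Import all_boot all_order all_algebra all_field.
Set Implicit Arguments. Unset Strict Implicit. Unset Printing Implicit Defensive.
Import Order.TTheory GRing.Theory Num.Theory.
Local Open Scope ring_scope.

Section Val.
Variables (K : fieldType) (L : fieldExtType K) (v : L -> int).

(* "v x >= m", with v 0 = +oo *)
Definition vge (x : L) (m : int) : Prop := x = 0 \/ m <= v x.

Definition is_normalized_dval : Prop :=
  [/\ forall x y : L, x != 0 -> y != 0 -> v (x * y) = v x + v y,
      forall x y : L, x != 0 -> y != 0 -> x + y != 0 ->
                      Num.min (v x) (v y) <= v (x + y)
    & forall m : int, exists x : L, x != 0 /\ v x = m].

Definition K_complete : Prop :=
  forall u : nat -> K,
    (forall M : int, exists N : nat, forall i j, (N <= i)%N -> (N <= j)%N ->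
        vge ((u i - u j)%:A) M) ->
    exists l : K, forall M : int, exists N : nat, forall i, (N <= i)%N ->
        vge ((u i - l)%:A) M.

Definition OK_unit (c : K) : Prop := c != 0 /\ v (c%:A) = 0.

(* x == y mod z * P_L^T ; T = None means T = infinity (equality) *)
Definition congT (T : option nat) (x y z : L) : Prop :=
  match T with
  | None => x = y
  | Some T => vge (x - y) (v z + T%:Z)
  end.

(* v_L(x) >= m + T  (with T = infinity meaning x = 0) *)
Definition vgeT (T : option nat) (x : L) (m : int) : Prop :=
  match T with
  | None => x = 0
  | Some T => vge x (m + T%:Z)
  end.
End Val.

Section Comb.
Variables (p n : nat) (b : nat -> int) (h : int).

Definition digit (s j : nat) : nat := (s %/ p ^ j) %% p.

Definition preceq (s t : nat) : bool :=
  all (fun j => digit s j <= digit t j)%N (iota 0 n).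

Definition bfrak (s : nat) : int :=
  \sum_(1 <= i < n.+1) ((digit s (n - i) * p ^ (n - i))%N%:Z * b i).

(* frak a (t): the (unique) s in S_{p^n} with frak b(s) = -t mod p^n
   (defined as the least such s) *)
Definition afrak (t : int) : nat :=
  find (fun s => ((p ^ n)%N%:Z %| bfrak s + t)%Z) (iota 0 (p ^ n)).

Definition bb : int :=
  h + (find (fun k => afrak (h + k%:Z) == (p ^ n).-1) (iota 0 (p ^ n)))%:Z.

Definition Dst (s : nat) (t : int) : int :=
  ((bfrak s + t - h) %/ (p ^ n)%N%:Z)%Z.

Definition Hst (s : nat) (t : int) : int :=
  h + ((bfrak s + t - h) %% (p ^ n)%N%:Z)%Z.

Definition dd (s : nat) : int := Dst s bb.

Definition ww (s : nat) : int :=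
  foldr Num.min (dd s - dd 0)
    [seq dd u - dd (u - s) | u <- iota 0 (p ^ n) & preceq s u].

Definition eps (s : nat) (t : int) : int := Dst s t - ww s.
End Comb.

Definition setting (p n : nat) (K : fieldType) (L : fieldExtType K)
  (v : L -> int) (pi : K) : Prop :=
  [/\ prime p, is_normalized_dval v, K_complete v & \dim {: L} = (p ^ n)%N] /\
  [/\ (* v_L(K^x) = p^n Z : totally ramified, v_K = v_L / p^n *)
      (forall c : K, c != 0 -> ((p ^ n)%N%:Z %| v (c%:A))%Z),
      pi != 0 /\ v (pi%:A) = (p ^ n)%N%:Z
    & (* residue characteristic p *)
      ((p%:R : K) = 0 \/ 0 < v ((p%:R : K)%:A))].

Definition is_action (p n : nat) (K : fieldType) (L : fieldExtType K)
  (A : falgType K) (act : A -> L -> L) : Prop :=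
  [/\ \dim {: A} = (p ^ n)%N,
      forall (k : K) (a c : A) (x : L), act (k *: a + c) x = k *: act a x + act c x,
      forall (a : A) (k : K) (x y : L), act a (k *: x + y) = k *: act a x + act a y,
      forall x : L, act 1 x = x
    & forall (a c : A) (x : L), act (a * c) x = act a (act c x)].

Definition scaffold (p n : nat) (K : fieldType) (L : fieldExtType K)
  (v : L -> int) (A : falgType K) (act : A -> L -> L) (T : option nat)
  (b : nat -> int) (lam : int -> L) (Psi : nat -> A) : Prop :=
  [/\
      (if T is Some T' then (1 <= T')%N else true),
      (forall i, (1 <= i <= n)%N -> coprime `|b i|%N p),
      (forall t, lam t != 0 /\ v (lam t) = t) &
   [/\ (forall t1 t2, (t1 == t2 %[mod (p ^ n)%N%:Z])%Z ->
          exists c : K, lam t1 / lam t2 = c%:A),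
      (forall i, (1 <= i <= n)%N -> act (Psi i) 1 = 0)
    & (forall i t, (1 <= i <= n)%N ->
        let t' := t + (p ^ (n - i))%N%:Z * b i in
        exists u : K, OK_unit v u /\
          congT v T (act (Psi i) (lam t))
            (if (1 <= digit p (afrak p n b t) (n - i))%N
             then u%:A * lam t' else 0)
            (lam t'))]].

(* Upsilon^(s): words in Psi_1..Psi_n (as index sequences) in which the
   exponents of Psi_i sum to s_(n-i) *)
Definition in_Upsilon (p n : nat) (s : nat) (word : seq nat) : bool :=
  all (fun i => (1 <= i <= n)%N) word &&
  all (fun i => count_mem i word == digit p s (n - i)) (iota 1 n).

Definition word_prod (K : fieldType) (A : falgType K) (Psi : nat -> A)
  (word : seq nat) : A := \prod_(i <- word) Psi i.

From HB Require Import structures.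
From mathcomp Require Import all_boot all_order all_algebra all_field.
From mathcomp Require Import zify ring lra.
Import Order.TTheory GRing.Theory Num.Theory.
Set Implicit Arguments. Unset Strict Implicit. Unset Printing Implicit Defensive.
Local Open Scope ring_scope.

(* Every x in L expands in the basis lam_0, ..., lam_(p^n - 1) with terms of
   pairwise distinct valuations, so v(Psi_i x) >= v(x) + p^(n-i) b_i, and on
   lam_t the scaffold axiom gives a unit multiple of lam_(t + p^(n-i) b_i), or 0
   when the digit a(t)_(n-i) vanishes, up to the tolerance.  As b is injective
   modulo p^n on S_{p^n} (the b_i are prime to p), this shift lowers the digit
   a(t)_(n-i) by one.  Applying the letters of a word in Upsilon^(s) one at a
   time gives Psi lam_t = u lam_(t + b(s)) with u a unit when s <= a(t), and
   Psi lam_t = 0 otherwise, both up to the tolerance.  Finally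
   lam_(t + b(s)) = pi^D(s,t) y lam_H(s,t) with y a unit, and (ii) only uses
   w(s) <= d(s). *)

Lemma alg_neq0 (K : fieldType) (L : fieldExtType K) (c : K) : c != 0 -> c%:A != 0 :> L.
Proof. by move=> c0; rewrite scaler_eq0 negb_or c0 oner_neq0. Qed.

Section Valuation.
Variables (K : fieldType) (L : fieldExtType K) (v : L -> int).
Hypothesis v_dval : is_normalized_dval v.

Lemma dvalM x y : x != 0 -> y != 0 -> v (x * y) = v x + v y.
Proof. by case: v_dval => dvalM _ _; apply: dvalM. Qed.

Lemma dvalD x y : x != 0 -> y != 0 -> x + y != 0 -> Num.min (v x) (v y) <= v (x + y).
Proof. by case: v_dval => _ dvalD _; apply: dvalD. Qed.

Lemma dval1 : v 1 = 0.
Proof. by have := @dvalM 1 1 (oner_neq0 _) (oner_neq0 _); rewrite mulr1; lia. Qed.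

Lemma dvalN x : v (- x) = v x.
Proof.
have [->|x0] := eqVneq x 0; first by rewrite oppr0.
have N1_neq0 : (-1 : L) != 0 by rewrite oppr_eq0 oner_neq0.
have vN1 : v (-1) = 0 by have := dvalM N1_neq0 N1_neq0; rewrite mulrNN mulr1 dval1; lia.
by rewrite -mulN1r dvalM // vN1 add0r.
Qed.

Lemma vge_val x : vge v x (v x).
Proof. by right. Qed.

Lemma vge_le x m m' : m' <= m -> vge v x m -> vge v x m'.
Proof. by move=> le_m [->|h]; [left | right; apply: le_trans h]. Qed.

Lemma vgeD x y m : vge v x m -> vge v y m -> vge v (x + y) m.
Proof.
case=> [->|hx]; first by rewrite add0r.
case=> [->|hy]; first by rewrite addr0; right.
have [->|x0] := eqVneq x 0; first by rewrite add0r; right.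
have [->|y0] := eqVneq y 0; first by rewrite addr0; right.
have [|xy0] := eqVneq (x + y) 0; first by left.
by right; apply: le_trans (dvalD x0 y0 xy0); rewrite le_min hx hy.
Qed.

Lemma vgeM x y m k : vge v x m -> vge v y k -> vge v (x * y) (m + k).
Proof.
case=> [->|hx]; first by left; rewrite mul0r.
case=> [->|hy]; first by left; rewrite mulr0.
have [->|x0] := eqVneq x 0; first by left; rewrite mul0r.
have [->|y0] := eqVneq y 0; first by left; rewrite mulr0.
by right; rewrite dvalM // lerD.
Qed.

Lemma vge_sum (I : Type) (r : seq I) (P : pred I) (F : I -> L) m :
  (forall i, P i -> vge v (F i) m) -> vge v (\sum_(i <- r | P i) F i) m.
Proof.
move=> hF; apply: (big_ind (fun z => vge v z m)) => [|x y|i /hF] //; first by left.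
exact: vgeD.
Qed.

Lemma dval_addr_gt x y : x != 0 -> vge v y (v x + 1) -> x + y != 0 /\ v (x + y) = v x.
Proof.
move=> x0 [->|hy]; first by rewrite addr0.
have [->|y0] := eqVneq y 0; first by rewrite addr0.
have lt_xy : v x < v y by apply: lt_le_trans hy; rewrite ltrDl.
have xy0 : x + y != 0.
  apply: contraTneq lt_xy => /eqP; rewrite addr_eq0 => /eqP ->.
  by rewrite dvalN ltxx.
have le_x_xy : v x <= v (x + y).
  by have := dvalD x0 y0 xy0; rewrite ge_min => /orP[] le; move: lt_xy le; lia.
have Ny0 : - y != 0 by rewrite oppr_eq0.
have := dvalD xy0 Ny0; rewrite addrK dvalN => /(_ x0).
rewrite ge_min => /orP[le_xy_x | le_y_x]; first by split=> //; apply/eqP; rewrite eq_le le_xy_x.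
by move: lt_xy; rewrite ltNge le_y_x.
Qed.

(* The term of least valuation dominates the sum, so it alone bounds it. *)
Lemma vge_sum_distinct (N : nat) (y : 'I_N -> L) m :
  (forall i j, i != j -> y i != 0 -> y j != 0 -> v (y i) != v (y j)) ->
  vge v (\sum_i y i) m -> forall i, vge v (y i) m.
Proof.
move=> y_distinct hsum i.
have [|yi0] := eqVneq (y i) 0; first by left.
have [k yk0 k_min] := @arg_minP _ int _ i (fun j => y j != 0) (fun j => v (y j)) yi0.
have rest_gt : vge v (\sum_(j | j != k) y j) (v (y k) + 1).
  apply: vge_sum => j jk; have [|yj0] := eqVneq (y j) 0; first by left.
  by right; move: (k_min j yj0) (y_distinct j k jk yj0 yk0); lia.
have [sum0 sum_val] := dval_addr_gt yk0 rest_gt.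
move: hsum; rewrite (bigD1 k) //= => -[sum_eq0|]; first by rewrite sum_eq0 eqxx in sum0.
by rewrite sum_val => le_m; right; apply: le_trans le_m (k_min _ yi0).
Qed.

Lemma dval_algM (c d : K) : c != 0 -> d != 0 -> v (c * d)%:A = v c%:A + v d%:A.
Proof. by move=> c0 d0; rewrite -scalerA -[c *: _]mulr_algl dvalM ?alg_neq0. Qed.

Lemma OK_unit1 : OK_unit v 1.
Proof. by split; [exact: oner_neq0 | rewrite scale1r dval1]. Qed.

Lemma OK_unitM (c d : K) : OK_unit v c -> OK_unit v d -> OK_unit v (c * d).
Proof. by move=> [c0 vc] [d0 vd]; split; [rewrite mulf_neq0 | rewrite dval_algM // vc vd]. Qed.

End Valuation.

Lemma residue_unique (N : nat) (a b : int) (i j : nat) :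
  (N%:Z %| a)%Z -> (N%:Z %| b)%Z -> a + i%:Z = b + j%:Z -> (i < N)%N -> (j < N)%N -> i = j.
Proof.
move=> /dvdzP[ka ->] /dvdzP[kb ->] e lt_iN lt_jN.
have : ((ka * N%:Z + i%:Z) %% N%:Z)%Z = ((kb * N%:Z + j%:Z) %% N%:Z)%Z by rewrite e.
by rewrite !modzMDl !modz_small //; lia.
Qed.

(* The lambda_t with 0 <= t < N have valuations distinct modulo N = v(K^x),
   hence form a valuation-adapted K-basis of L. *)
Section LambdaBasis.
Variables (K : fieldType) (L : fieldExtType K) (v : L -> int) (N : nat).
Variable lam : int -> L.
Hypothesis v_dval : is_normalized_dval v.
Hypothesis dvd_valK : forall c : K, c != 0 -> (N%:Z %| v (c%:A))%Z.
Hypothesis val_lam : forall t, lam t != 0 /\ v (lam t) = t.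
Hypothesis dimL : \dim {: L} = N.

Lemma val_scale_lam (c : K) (t : int) :
  c != 0 -> c *: lam t != 0 /\ v (c *: lam t) = v (c%:A) + t.
Proof.
move=> c0; have [lam0 vlam] := val_lam t.
by rewrite -[c *: lam t]mulr_algl mulf_neq0 ?alg_neq0 // dvalM ?alg_neq0 // vlam.
Qed.

Lemma val_scale_lam_neq (c : 'I_N -> K) (i j : 'I_N) :
  i != j -> c i *: lam i%:Z != 0 -> c j *: lam j%:Z != 0 ->
  v (c i *: lam i%:Z) != v (c j *: lam j%:Z).
Proof.
move=> ij ci_lam0 cj_lam0.
have ci0 : c i != 0 by apply: contraNneq ci_lam0 => ->; rewrite scale0r.
have cj0 : c j != 0 by apply: contraNneq cj_lam0 => ->; rewrite scale0r.
have [_ ->] := val_scale_lam i%:Z ci0; have [_ ->] := val_scale_lam j%:Z cj0.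
apply: contra ij => /eqP e; apply/eqP/val_inj.
exact: residue_unique (dvd_valK ci0) (dvd_valK cj0) e (ltn_ord i) (ltn_ord j).
Qed.

Definition lam_basis := [tuple lam i%:Z | i < N].

Lemma free_lam_basis : free lam_basis.
Proof.
apply/freeP => k sum0 i; apply/eqP; apply: contraT => ki0.
have [ki_lam0 _] := val_scale_lam i%:Z ki0.
have sum_terms := @vge_sum_distinct _ _ _ v_dval _ (fun j => k j *: lam j%:Z)
  (v (k i *: lam i%:Z) + 1) (@val_scale_lam_neq k).
have : vge v (\sum_j k j *: lam j%:Z) (v (k i *: lam i%:Z) + 1).
  by left; rewrite -[RHS]sum0; apply: eq_bigr => j _; rewrite nth_mktuple.
move=> /sum_terms/(_ i) [e|]; last by lia.
by rewrite e eqxx in ki_lam0.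
Qed.

Lemma lam_expansion x : exists c : 'I_N -> K,
  x = \sum_(i < N) c i *: lam i%:Z /\
  forall m, vge v x m -> forall i, vge v (c i *: lam i%:Z) m.
Proof.
have lam_basisP : basis_of fullv lam_basis.
  by rewrite basisEfree free_lam_basis subvf size_tuple dimL leqnn.
have x_span : x \in <<lam_basis>>%VS by rewrite (span_basis lam_basisP) memvf.
exists (fun i => coord lam_basis i x).
have ex : x = \sum_(i < N) coord lam_basis i x *: lam i%:Z.
  by rewrite {1}(coord_span x_span); apply: eq_bigr => i _; rewrite nth_mktuple.
split=> // m hx.
apply: (@vge_sum_distinct _ _ _ v_dval _ (fun j => coord lam_basis j x *: lam j%:Z))
  (@val_scale_lam_neq _) _.
by rewrite -ex.
Qed.

End LambdaBasis.

Section Digits.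
Variable p : nat.
Hypothesis p_gt1 : (1 < p)%N.

Let p_gt0 : (0 < p)%N. Proof. exact: ltnW. Qed.

Lemma digit0 s : digit p s 0 = (s %% p)%N.
Proof. by rewrite /digit expn0 divn1. Qed.

Lemma digitS s j : digit p s j.+1 = digit p (s %/ p) j.
Proof. by rewrite /digit expnS divnMA. Qed.

Lemma digit_lt s j : (digit p s j < p)%N.
Proof. by rewrite /digit ltn_pmod. Qed.

Lemma digit_subn s k j : (0 < digit p s k)%N ->
  digit p (s - p ^ k) j = (digit p s j - (j == k))%N.
Proof.
elim: k s j => [|k IHk] s j digit_pos.
  rewrite expn0; rewrite digit0 in digit_pos.
  have -> : (s - 1 = s %/ p * p + (s %% p - 1))%N.
    by rewrite {1}(divn_eq s p); move: (s %/ p * p)%N (s %% p)%N digit_pos => a r; lia.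
  have lt_p : (s %% p - 1 < p)%N by have := ltn_pmod s p_gt0; lia.
  case: j => [|j]; first by rewrite !digit0 modnMDl modn_small.
  by rewrite !digitS divnMDl // (divn_small lt_p) addn0 subn0.
rewrite digitS in digit_pos.
have le_pk : (p ^ k <= s %/ p)%N.
  by rewrite leqNgt; apply: contraTN digit_pos => lt_s; rewrite /digit divn_small // mod0n.
have -> : (s - p ^ k.+1 = (s %/ p - p ^ k) * p + s %% p)%N.
  by rewrite {1}(divn_eq s p) mulnBl -expnSr; have := leq_mul le_pk (leqnn p); rewrite -expnSr; lia.
have lt_p : (s %% p < p)%N by rewrite ltn_pmod.
case: j => [|j]; first by rewrite !digit0 modnMDl modn_mod subn0.
by rewrite !digitS divnMDl // (divn_small lt_p) addn0 IHk // eqSS.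
Qed.

Lemma digit_expn m k : (k < m)%N -> digit p (p ^ m) k = 0%N.
Proof.
move=> lt_km; rewrite /digit -expnB ?(ltnW lt_km) //.
by apply/eqP; rewrite -/(dvdn p _) dvdn_exp ?dvdnn // subn_gt0.
Qed.

End Digits.

(* Generalizes bfrak (c_j = b_(n-j)) so that it can be peeled digit by digit. *)
Definition digit_sum (p : nat) (c : nat -> int) (m s : nat) : int :=
  \sum_(j < m) ((digit p s j * p ^ j)%N%:Z * c j).

Section DigitSum.
Variable p : nat.
Hypothesis p_gt1 : (1 < p)%N.

Lemma digit_sumS c m s : digit_sum p c m.+1 s =
  (digit p s 0)%:Z * c 0%N + p%:Z * digit_sum p (fun j => c j.+1) m (s %/ p).
Proof.
rewrite /digit_sum big_ord_recl /= expn0 muln1; congr (_ + _).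
by rewrite mulr_sumr; apply: eq_bigr => j _; rewrite /= digitS expnS !PoszM; ring.
Qed.

(* Since every c_j is prime to p, s is recovered from its digit sum modulo p^m
   one digit at a time. *)
Lemma digit_sum_inj m c s s' : (forall j, (j < m)%N -> coprime `|c j| p) ->
  (s < p ^ m)%N -> (s' < p ^ m)%N ->
  ((p ^ m)%N%:Z %| digit_sum p c m s - digit_sum p c m s')%Z -> s = s'.
Proof.
elim: m c s s' => [|m IHm] c s s' c_coprime lt_s lt_s' dvd_diff.
  by move: lt_s lt_s'; rewrite expn0 !ltnS !leqn0 => /eqP -> /eqP ->.
move: dvd_diff; rewrite !digit_sumS.
set G := digit_sum p _ m (s %/ p); set G' := digit_sum p _ m (s' %/ p).
set d := digit p s 0; set d' := digit p s' 0.
have -> : (d%:Z * c 0%N + p%:Z * G) - (d'%:Z * c 0%N + p%:Z * G') =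
    (d%:Z - d'%:Z) * c 0%N + p%:Z * (G - G') by ring.
move=> dvd_diff.
have dvd_low : (p%:Z %| (d%:Z - d'%:Z) * c 0%N)%Z.
  have dvd_p : (p%:Z %| (p ^ m.+1)%N%:Z)%Z by rewrite dvdzE expnS dvdn_mulr.
  rewrite -(rpredDr _ (dvdz_mulr (G - G') (dvdzz p%:Z))).
  exact: dvdz_trans dvd_p dvd_diff.
rewrite Gauss_dvdzl in dvd_low; last by rewrite coprimezE coprime_sym c_coprime.
have eq_d : d' = d.
  apply: (@residue_unique p (d%:Z - d'%:Z) 0) (dvdz0 _) _ (digit_lt p_gt1 _ _)
    (digit_lt p_gt1 _ _) => //.
  by rewrite subrK add0r.
move: dvd_diff; rewrite eq_d subrr mul0r add0r expnS PoszM dvdz_mul2l; last first.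
  by rewrite eqz_nat -lt0n ltnW.
move=> /(IHm (fun j => c j.+1)) eq_div.
have {}eq_div : (s %/ p = s' %/ p)%N.
  apply: eq_div => [j lt_jm||]; first exact: c_coprime.
  - by rewrite ltn_divLR ?(ltnW p_gt1) // -expnSr.
  - by rewrite ltn_divLR ?(ltnW p_gt1) // -expnSr.
by rewrite (divn_eq s p) (divn_eq s' p) eq_div -!digit0 -/d -/d' eq_d.
Qed.

Lemma digit_sum_subn c m s k : (k < m)%N -> (0 < digit p s k)%N ->
  digit_sum p c m (s - p ^ k) = digit_sum p c m s - (p ^ k)%N%:Z * c k.
Proof.
move=> lt_km digit_pos; rewrite /digit_sum.
have split_term (j : 'I_m) : (digit p (s - p ^ k) j * p ^ j)%N%:Z * c j =
    (digit p s j * p ^ j)%N%:Z * c j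
    - (if j == Ordinal lt_km then (p ^ k)%N%:Z * c k else 0).
  rewrite digit_subn //; have [-> /=|ne_jk] := eqVneq j (Ordinal lt_km).
    rewrite eqxx mulnBl mul1n -subzn; last exact: leq_pmull.
    by ring.
  have -> : (nat_of_ord j == k) = false.
    by apply: contraNF ne_jk => /eqP jk; apply/eqP/val_inj.
  by rewrite subn0 subr0.
by rewrite (eq_bigr _ (fun j _ => split_term j)) sumrB -big_mkcond big_pred1_eq.
Qed.

End DigitSum.

Section Afrak.
Variables (p n : nat) (b : nat -> int).
Hypothesis p_gt1 : (1 < p)%N.
Hypothesis b_coprime : forall i, (1 <= i <= n)%N -> coprime `|b i| p.

Lemma bfrakE s : bfrak p n b s = digit_sum p (fun j => b (n - j)%N) n s.
Proof.
rewrite /bfrak /digit_sum big_add1 /= big_nat_rev /= big_mkord.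
apply: eq_bigr => j _; have lt_jn := ltn_ord j.
have -> : ((0 + n - j.+1).+1 = n - j)%N by lia.
by have -> : (n - (n - j) = j)%N by lia.
Qed.

Lemma afrak_le t : (afrak p n b t <= p ^ n)%N.
Proof. by rewrite /afrak -[X in (_ <= X)%N](size_iota 0) find_size. Qed.

Lemma afrakP t : (afrak p n b t < p ^ n)%N ->
  ((p ^ n)%N%:Z %| bfrak p n b (afrak p n b t) + t)%Z.
Proof.
rewrite /afrak => lt_a.
set P := fun s => _; have has_P : has P (iota 0 (p ^ n)) by rewrite has_find size_iota.
by have := nth_find 0%N has_P; rewrite nth_iota.
Qed.

Lemma afrak_lt t k : (k < n)%N -> (0 < digit p (afrak p n b t) k)%N ->
  (afrak p n b t < p ^ n)%N.
Proof.
move=> lt_kn digit_pos; rewrite ltn_neqAle afrak_le andbT.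
by apply: contraTneq digit_pos => ->; rewrite digit_expn.
Qed.

Lemma afrak_unique t s : (s < p ^ n)%N -> ((p ^ n)%N%:Z %| bfrak p n b s + t)%Z ->
  afrak p n b t = s.
Proof.
move=> lt_s dvd_s.
have le_as : (afrak p n b t <= s)%N.
  rewrite leqNgt; apply/negP => lt_sa.
  by have := before_find 0%N lt_sa; rewrite nth_iota // dvd_s.
apply: (@digit_sum_inj p p_gt1 n (fun j => b (n - j)%N)) => //.
- by move=> j lt_jn; apply: b_coprime; lia.
- exact: leq_ltn_trans lt_s.
rewrite -!bfrakE (_ : _ - _ = (bfrak p n b (afrak p n b t) + t) - (bfrak p n b s + t));
  last by ring.
by rewrite rpredB // afrakP // (leq_ltn_trans le_as).
Qed.

Lemma afrak_shift t i : (1 <= i <= n)%N -> (0 < digit p (afrak p n b t) (n - i))%N ->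
  afrak p n b (t + (p ^ (n - i))%N%:Z * b i) = (afrak p n b t - p ^ (n - i))%N.
Proof.
move=> i_range digit_pos.
have lt_ni : (n - i < n)%N by lia.
have lt_a := afrak_lt lt_ni digit_pos.
apply: afrak_unique; first exact: leq_ltn_trans (leq_subr _ _) lt_a.
rewrite bfrakE digit_sum_subn // -bfrakE (_ : n - (n - i) = i)%N; last by lia.
rewrite (_ : _ + _ = bfrak p n b (afrak p n b t) + t); last by ring.
exact: afrakP.
Qed.

End Afrak.

Section Action.
Variables (p n : nat) (K : fieldType) (L : fieldExtType K) (A : falgType K).
Variable act : A -> L -> L.
Hypothesis act_lin : is_action p n act.

Lemma actD a x y : act a (x + y) = act a x + act a y.
Proof. by case: act_lin => _ _ linR _ _; rewrite -{1}[x]scale1r linR scale1r. Qed.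

Lemma act0 a : act a 0 = 0.
Proof. by apply: (addrI (act a 0)); rewrite -actD !addr0. Qed.

Lemma actZ a k x : act a (k *: x) = k *: act a x.
Proof. by case: act_lin => _ _ linR _ _; rewrite -[k *: x]addr0 linR act0 addr0. Qed.

Lemma actB a x y : act a (x - y) = act a x - act a y.
Proof. by rewrite actD -scaleN1r actZ scaleN1r. Qed.

Lemma act_sum a (I : Type) (r : seq I) (P : pred I) (F : I -> L) :
  act a (\sum_(i <- r | P i) F i) = \sum_(i <- r | P i) act a (F i).
Proof. exact: (big_morph (act a) (actD a) (act0 a)). Qed.

Lemma actZl k a x : act (k *: a) x = k *: act a x.
Proof.
case: act_lin => _ linL _ _ _.
have act0l : act 0 x = 0.
  by have := linL 1 0 0 x; rewrite !scale1r addr0 => e; apply: (addrI (act 0 x)); rewrite -e addr0.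
by rewrite -[k *: a]addr0 linL act0l addr0.
Qed.

Lemma act1 x : act 1 x = x.
Proof. by case: act_lin. Qed.

Lemma actM a c x : act (a * c) x = act a (act c x).
Proof. by case: act_lin. Qed.

End Action.

(* [cong_at v T x y m] is [congT v T x y z] with the modulus given by its
   valuation m = v z rather than by z itself. *)
Definition cong_at (K : fieldType) (L : fieldExtType K) (v : L -> int)
    (T : option nat) (x y : L) (m : int) : Prop :=
  match T with None => x = y | Some T => vge v (x - y) (m + T%:Z) end.

Section Congruence.
Variables (K : fieldType) (L : fieldExtType K) (v : L -> int) (T : option nat).
Hypothesis v_dval : is_normalized_dval v.

Lemma cong_at_refl x m : cong_at v T x x m.
Proof. by case: T => //= T'; rewrite subrr; left. Qed.

Lemma cong_at_trans x y z m : cong_at v T x y m -> cong_at v T y z m -> cong_at v T x z m.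
Proof.
case: T => [T'|] /=; last by move=> -> ->.
by move=> hxy hyz; rewrite -(subrKA y); apply: vgeD.
Qed.

Lemma cong_atZ k x y m : cong_at v T x y m -> cong_at v T (k *: x) (k *: y) (m + v k%:A).
Proof.
have [->|k0] := eqVneq k 0; first by rewrite !scale0r => _; apply: cong_at_refl.
case: T => [T'|] /=; last by move=> ->.
move=> hxy; rewrite -scalerBr -[k *: (x - y)]mulr_algl.
by apply: vge_le (vgeM v_dval (vge_val v k%:A) hxy); lia.
Qed.

Lemma cong_at_vge x y m : cong_at v T x y m -> vge v y m -> vge v x m.
Proof.
case: T => [T'|] /=; last by move=> ->.
by move=> hxy hy; rewrite -(subrK y x); apply: vgeD => //; apply: vge_le hxy; lia.
Qed.

Lemma cong_at0_vgeT x m m' : m' <= m -> cong_at v T x 0 m -> vgeT v T x m'.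
Proof. by case: T => [T'|] //= le_m; rewrite subr0; apply: vge_le; lia. Qed.

Section Tolerance.
Hypothesis T_pos : forall T', T = Some T' -> (0 < T')%N.

(* Tolerance T >= 1 is what makes a congruence modulo y P_L^T determine v x. *)
Lemma cong_at_val x y : cong_at v T x y (v y) -> y != 0 -> x != 0 /\ v x = v y.
Proof.
move: T_pos; case: T => [T' /(_ T' erefl) T_gt0|_] /=; last by move=> ->.
move=> hxy y0; have := @dval_addr_gt _ _ _ v_dval y (x - y) y0.
by rewrite subrKC; apply; apply: vge_le hxy; lia.
Qed.

Lemma congT_unit_val x (c y : K) l : c != 0 -> l != 0 -> OK_unit v y ->
  congT v T x ((c * y)%:A * l) (c%:A * l) -> x != 0 /\ v x = v c%:A + v l.
Proof.
move=> c0 l0 [y0 vy] hx.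
have cyl0 : (c * y)%:A * l != 0 by rewrite mulf_neq0 // alg_neq0 // mulf_neq0.
have v_cyl : v ((c * y)%:A * l) = v c%:A + v l.
  by rewrite dvalM ?alg_neq0 ?mulf_neq0 // dval_algM // vy addr0.
have hx' : cong_at v T x ((c * y)%:A * l) (v ((c * y)%:A * l)).
  by rewrite v_cyl -dvalM ?alg_neq0 //; exact: hx.
by have [x0 ->] := cong_at_val hx' cyl0; rewrite v_cyl.
Qed.

End Tolerance.

End Congruence.

Lemma HstE p n b h s t :
  Hst p n b h s t = bfrak p n b s + t - Dst p n b h s t * (p ^ n)%N%:Z.
Proof.
rewrite /Hst /Dst; have := divz_eq (bfrak p n b s + t - h) (p ^ n)%N%:Z.
by move: (_ * _) => qN; lia.
Qed.

Lemma bfrak0 p n b : bfrak p n b 0 = 0.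
Proof. by rewrite /bfrak big1 // => i _; rewrite /digit div0n mod0n mul0n mul0r. Qed.

(* w(s) <= d(s) - d(0), and d(0) >= 0 because b lies in S_{p^n}(h). *)
Lemma ww_le_dd p n b h s : (0 < p)%N -> ww p n b h s <= dd p n b h s.
Proof.
move=> p_gt0.
have le_w : ww p n b h s <= dd p n b h s - dd p n b h 0.
  by rewrite /ww; elim: [seq _ | _ <- _] => //= a l IHl; rewrite ge_min IHl orbT.
have dd0_ge0 : 0 <= dd p n b h 0.
  by rewrite /dd /Dst bfrak0 /bb add0r addrAC subrr add0r divz_ge0 // ltz_nat expn_gt0 p_gt0.
by apply: le_trans le_w _; rewrite lerBlDr lerDl.
Qed.

Section Scaffold.
Variables (p n : nat) (K : fieldType) (L : fieldExtType K) (v : L -> int).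
Variables (A : falgType K) (act : A -> L -> L) (T : option nat) (b : nat -> int).
Variables (lam : int -> L) (Psi : nat -> A).
Hypothesis v_dval : is_normalized_dval v.
Hypothesis act_lin : is_action p n act.
Hypothesis dvd_valK : forall c : K, c != 0 -> ((p ^ n)%N%:Z %| v c%:A)%Z.
Hypothesis val_lam : forall t, lam t != 0 /\ v (lam t) = t.
Hypothesis dimL : \dim {: L} = (p ^ n)%N.
Hypothesis p_gt1 : (1 < p)%N.
Hypothesis b_coprime : forall i, (1 <= i <= n)%N -> coprime `|b i| p.
Hypothesis Psi_lam : forall i t, (1 <= i <= n)%N ->
  let t' := t + (p ^ (n - i))%N%:Z * b i in
  exists u : K, OK_unit v u /\
    congT v T (act (Psi i) (lam t))
      (if (1 <= digit p (afrak p n b t) (n - i))%N then u%:A * lam t' else 0) (lam t').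

Definition shift i : int := (p ^ (n - i))%N%:Z * b i.

Definition word_shift (w : seq nat) : int := \sum_(i <- w) shift i.

Definition letters_ok (w : seq nat) := all (fun i => (1 <= i <= n)%N) w.

Lemma Psi_lam_cong i t : (1 <= i <= n)%N -> exists u : K, OK_unit v u /\
  cong_at v T (act (Psi i) (lam t))
    (if (0 < digit p (afrak p n b t) (n - i))%N then u *: lam (t + shift i) else 0)
    (t + shift i).
Proof.
move=> i_range; have [u [u_unit hcong]] := Psi_lam t i_range.
exists u; split=> //; have [_ vlam] := val_lam (t + shift i).
by rewrite -[X in cong_at _ _ _ _ X]vlam -[u *: _]mulr_algl.
Qed.

Lemma vge_act_Psi_lam i t : (1 <= i <= n)%N -> vge v (act (Psi i) (lam t)) (t + shift i).
Proof.
move=> i_range; have [u [[u0 vu] hcong]] := Psi_lam_cong t i_range.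
apply: (cong_at_vge v_dval hcong); case: ifP => _; last by left.
have [lam0 vlam] := val_lam (t + shift i).
by right; rewrite -mulr_algl dvalM ?alg_neq0 // vu vlam add0r.
Qed.

Lemma vge_act_Psi i x m : (1 <= i <= n)%N -> vge v x m ->
  vge v (act (Psi i) x) (m + shift i).
Proof.
move=> i_range hx; have [c [ex hc]] := lam_expansion v_dval dvd_valK val_lam dimL x.
rewrite ex (act_sum act_lin); apply: (vge_sum v_dval) => k _.
have [ck0|ck0] := eqVneq (c k) 0; first by rewrite ck0 scale0r (act0 act_lin); left.
have [ck_lam0 vck_lam] := val_scale_lam v_dval val_lam k%:Z ck0.
have le_m : m <= v (c k)%:A + k%:Z.
  by case: (hc m hx k) => [e|]; [rewrite e eqxx in ck_lam0 | rewrite vck_lam].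
rewrite (actZ act_lin) -mulr_algl.
by apply: vge_le (vgeM v_dval (vge_val v _) (vge_act_Psi_lam k%:Z i_range)); rewrite addrA lerD2r.
Qed.

Lemma vge_act_word w x m : letters_ok w -> vge v x m ->
  vge v (act (word_prod Psi w) x) (m + word_shift w).
Proof.
elim: w x m => [|i w IHw] x m.
  by rewrite /word_prod /word_shift !big_nil (act1 act_lin) addr0.
move=> /andP[i_range w_ok] hx.
rewrite /word_prod /word_shift !big_cons (actM act_lin) [shift i + _]addrC addrA.
exact: vge_act_Psi i_range (IHw x m w_ok hx).
Qed.

Lemma cong_at_act_word w x y m : letters_ok w -> cong_at v T x y m ->
  cong_at v T (act (word_prod Psi w) x) (act (word_prod Psi w) y) (m + word_shift w).
Proof.
move=> w_ok; case: T => [T'|] /=; last by move=> ->.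
by rewrite -(actB act_lin) => /(vge_act_word w_ok); apply: vge_le; lia.
Qed.

Definition word_fits (w : seq nat) (a : nat) :=
  all (fun i => count_mem i w <= digit p a (n - i))%N (iota 1 n).

Lemma word_fits_rcons w i a : (1 <= i <= n)%N -> (0 < digit p a (n - i))%N ->
  word_fits (rcons w i) a = word_fits w (a - p ^ (n - i)).
Proof.
move=> i_range digit_pos; apply: eq_in_all => j; rewrite mem_iota => j_range.
rewrite -cats1 count_cat /= digit_subn //.
have [<-|ne_ij] := eqVneq i j; first by rewrite !eqxx; lia.
by rewrite (_ : (n - j == n - i)%N = false) /= ?addn0 ?subn0 //; apply/eqP; lia.
Qed.

Lemma word_fits_rcons0 w i a : (1 <= i <= n)%N -> digit p a (n - i) = 0%N ->
  ~~ word_fits (rcons w i) a.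
Proof.
move=> i_range digit0; apply/allP => /(_ i); rewrite mem_iota digit0.
by rewrite -cats1 count_cat /= eqxx; lia.
Qed.

(* Read right to left, each letter Psi_i either lowers the digit a_(n-i) of
   afrak and moves lam_t to a unit multiple of its shifted lam, or (when that
   digit is already 0) kills lam_t up to the tolerance. *)
Lemma act_word_lam w t : letters_ok w ->
  if word_fits w (afrak p n b t)
  then exists u : K, OK_unit v u /\
    cong_at v T (act (word_prod Psi w) (lam t)) (u *: lam (t + word_shift w)) (t + word_shift w)
  else cong_at v T (act (word_prod Psi w) (lam t)) 0 (t + word_shift w).
Proof.
elim/last_ind: w t => [|w i IHw] t.
  move=> _; rewrite (_ : word_fits _ _) //; last by apply/allP.
  exists 1; split; first exact: OK_unit1.
  by rewrite /word_prod /word_shift !big_nil (act1 act_lin) scale1r addr0; apply: cong_at_refl.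
rewrite /letters_ok all_rcons => /andP[i_range w_ok].
have -> : t + word_shift (rcons w i) = (t + shift i) + word_shift w.
  by rewrite /word_shift big_rcons /=; ring.
rewrite /word_prod big_rcons /= (actM act_lin) -/(word_prod Psi w).
have [u [[u0 vu] hcong]] := Psi_lam_cong t i_range.
have := cong_at_act_word w_ok hcong.
have [digit0|digit_pos] := posnP (digit p (afrak p n b t) (n - i)).
  by rewrite (negbTE (word_fits_rcons0 w i_range digit0)) (act0 act_lin).
rewrite word_fits_rcons // -(afrak_shift p_gt1 b_coprime) // -/(shift i) (actZ act_lin).
move: (IHw (t + shift i) w_ok); case: ifP => _.
  move=> [u' [u'_unit hcong']] hcong_u; exists (u * u'); split; first exact: (OK_unitM v_dval).
  apply: (cong_at_trans v_dval hcong_u); rewrite -scalerA.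
  by have := cong_atZ v_dval u hcong'; rewrite vu addr0.
move=> hcong' hcong_u; apply: (cong_at_trans v_dval hcong_u).
by have := cong_atZ v_dval u hcong'; rewrite vu addr0 scaler0.
Qed.

Lemma word_shift_count w : letters_ok w ->
  word_shift w = \sum_(j <- iota 1 n) (count_mem j w)%:Z * shift j.
Proof.
elim: w => [|i w IHw]; first by rewrite /word_shift big_nil big1 // => j _; rewrite mul0r.
move=> /andP[i_range w_ok].
rewrite /word_shift big_cons -/(word_shift w) IHw //.
under [in RHS]eq_bigr do rewrite /= PoszD mulrDl.
rewrite big_split /=; congr (_ + _).
have i_in : i \in iota 1 n by rewrite mem_iota; lia.
rewrite (bigD1_seq i i_in (iota_uniq 1 n)) /= eqxx mul1r big1 ?addr0 // => j ne_ji.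
by rewrite eq_sym (negbTE ne_ji) mul0r.
Qed.

Lemma word_shift_bfrak s w : in_Upsilon p n s w -> word_shift w = bfrak p n b s.
Proof.
move=> /andP[w_ok /allP w_count].
rewrite word_shift_count // /bfrak /index_iota subSS subn0.
apply: eq_big_seq => j j_in; move: (w_count j j_in) => /eqP ->.
by rewrite /shift PoszM mulrA.
Qed.

Lemma word_fits_preceq s w a : in_Upsilon p n s w -> word_fits w a = preceq p n s a.
Proof.
move=> /andP[_ /allP w_count].
rewrite /word_fits (eq_in_all (a2 := fun i => digit p s (n - i) <= digit p a (n - i))%N);
  last by move=> j /w_count /eqP ->.
apply/allP/allP => le_digits j; rewrite mem_iota => j_range.
  by have := le_digits (n - j)%N; rewrite mem_iota subKn ?(ltnW j_range) //; apply; lia.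
by apply: le_digits; rewrite mem_iota; lia.
Qed.

Variable pi : K.
Hypothesis pi_neq0 : pi != 0.
Hypothesis val_pi : v pi%:A = (p ^ n)%N%:Z.
Hypothesis lam_ratio : forall t1 t2, (t1 == t2 %[mod (p ^ n)%N%:Z])%Z ->
  exists c : K, lam t1 / lam t2 = c%:A.

Lemma val_pi_exprz (z : int) : v (pi ^ z)%:A = z * (p ^ n)%N%:Z.
Proof.
have val_expn k : v (pi ^+ k)%:A = k%:Z * (p ^ n)%N%:Z.
  elim: k => [|k IHk]; first by rewrite expr0 scale1r dval1 // mul0r.
  by rewrite exprS dval_algM ?expf_neq0 // IHk val_pi intS mulrDl mul1r.
case: z => k; first by rewrite -exprnP val_expn.
have c0 : pi ^+ k.+1 != 0 by rewrite expf_neq0.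
have := dval_algM v_dval c0 (invr_neq0 c0); rewrite mulfV // scale1r dval1 //.
rewrite NegzE -exprnN val_expn mulNr => h.
by apply/eqP; rewrite -addr_eq0 addrC -h.
Qed.

(* lam_(t + D p^n) / lam_t lies in K and has valuation D p^n, so it is pi^D times a unit. *)
Lemma lam_addM t D : exists y : K,
  OK_unit v y /\ lam (t + D * (p ^ n)%N%:Z) = (pi ^ D * y)%:A * lam t.
Proof.
have [c hc] : exists c : K, lam (t + D * (p ^ n)%N%:Z) / lam t = c%:A.
  by apply: lam_ratio; apply/eqP; rewrite addrC modzMDl.
have [lam0 vlam] := val_lam t; have [lamD0 vlamD] := val_lam (t + D * (p ^ n)%N%:Z).
have ec : lam (t + D * (p ^ n)%N%:Z) = c%:A * lam t by rewrite -hc divfK.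
have c0 : c != 0 by apply: contraNneq lamD0 => c0; rewrite ec c0 scale0r mul0r.
set y := c / pi ^ D; have piD0 : pi ^ D != 0 by rewrite expfz_neq0.
have ey : c = pi ^ D * y by rewrite /y mulrC divfK.
have y0 : y != 0 by rewrite mulf_neq0 ?invr_eq0.
exists y; split; last by rewrite -ey.
split=> //; have := dvalM v_dval (alg_neq0 L c0) lam0; rewrite -ec vlamD vlam ey.
by rewrite dval_algM // val_pi_exprz; move: (D * _) => DN; lia.
Qed.

Lemma act_Phi_lam_fit h s t word : in_Upsilon p n s word -> preceq p n s (afrak p n b t) ->
  let Phi := pi ^ (- ww p n b h s) *: word_prod Psi word in
  let H := Hst p n b h s t in
  let e := eps p n b h s t in
  exists y : K, OK_unit v y /\
    congT v T (act Phi (lam t)) ((pi ^ e * y)%:A * lam H) ((pi ^ e)%:A * lam H).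
Proof.
move=> s_word fits Phi H e; have w_ok : letters_ok word by case/andP: s_word.
have := act_word_lam t w_ok; rewrite (word_fits_preceq _ s_word) fits (word_shift_bfrak s_word).
move=> [u [u_unit hcong]].
set D := Dst p n b h s t; set w := ww p n b h s.
have [y [y_unit eD]] := lam_addM H D.
exists (u * y); split; first exact: (OK_unitM v_dval).
have eH : t + bfrak p n b s = H + D * (p ^ n)%N%:Z by rewrite /H HstE; ring.
have eY : pi ^ (- w) *: (u *: lam (t + bfrak p n b s)) = (pi ^ e * (u * y))%:A * lam H.
  rewrite eH eD !scalerA scalerAl scalerA /e /eps -/D -/w [D - w]addrC expfzDr //.
  by congr (_ *: 1 * _); ring.
have [lam0 vlam] := val_lam H.
have vZ : v ((pi ^ e)%:A * lam H) = t + bfrak p n b s + v (pi ^ (- w))%:A.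
  rewrite dvalM ?alg_neq0 ?expfz_neq0 // !val_pi_exprz vlam eH /e /eps -/D -/w.
  by rewrite mulrBl mulNr; move: (D * _) (w * _) => DN wN; lia.
have := cong_atZ v_dval (pi ^ (- w)) hcong; rewrite eY -vZ.
by rewrite /Phi (actZl act_lin).
Qed.

Lemma act_Phi_lam_unfit h s t word : in_Upsilon p n s word -> ~~ preceq p n s (afrak p n b t) ->
  vgeT v T (act (pi ^ (- ww p n b h s) *: word_prod Psi word) (lam t))
    (Hst p n b h s (bb p n b h) + t - bb p n b h).
Proof.
move=> s_word unfit; have w_ok : letters_ok word by case/andP: s_word.
have := act_word_lam t w_ok.
rewrite (word_fits_preceq _ s_word) (negbTE unfit) (word_shift_bfrak s_word).
move=> /(cong_atZ v_dval (pi ^ (- ww p n b h s))); rewrite scaler0 -(actZl act_lin).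
apply: cong_at0_vgeT; rewrite HstE val_pi_exprz -/(dd p n b h s) mulNr.
have le_wN : ww p n b h s * (p ^ n)%N%:Z <= dd p n b h s * (p ^ n)%N%:Z.
  by rewrite ler_wpM2r // ww_le_dd // ltnW.
by move: (ww p n b h s * _) (dd p n b h s * _) le_wN => wN dN; lia.
Qed.

End Scaffold.

Theorem proposition3p10 (p n : nat) (K : fieldType) (L : fieldExtType K)
  (v : L -> int) (pi : K) (A : falgType K) (act : A -> L -> L)
  (T : option nat) (b : nat -> int) (lam : int -> L) (Psi : nat -> A)
  (h : int) (s : nat) (t : int) (word : seq nat) :
  setting p n v pi ->
  is_action p n act ->
  scaffold p n v act T b lam Psi ->
  (s < p ^ n)%N ->
  h <= t < h + (p ^ n)%N%:Z ->
  in_Upsilon p n s word ->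
  let Phi := (pi ^ (- ww p n b h s)) *: word_prod Psi word in
  let H := Hst p n b h s t in
  let e := eps p n b h s t in
  (preceq p n s (afrak p n b t) ->
     (exists y : K, OK_unit v y /\
        congT v T (act Phi (lam t)) ((pi ^ e * y)%:A * lam H)
                                    ((pi ^ e)%:A * lam H)) /\
     (e = 0 -> act Phi (lam t) != 0 /\ v (act Phi (lam t)) = H) /\
     (e = 1 -> act Phi (lam t) != 0 /\ v (act Phi (lam t)) = H + (p ^ n)%N%:Z))
  /\
  (~~ preceq p n s (afrak p n b t) ->
     vgeT v T (act Phi (lam t))
       (Hst p n b h s (bb p n b h) + t - bb p n b h)).
Proof.
move=> [[p_prime v_dval _ dimL] [dvd_valK [pi_neq0 val_pi] _]] act_lin
  [T_ge1 b_coprime val_lam [lam_ratio _ Psi_lam]] _ _ s_word Phi H e.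
have p_gt1 := prime_gt1 p_prime.
have T_pos T' : T = Some T' -> (0 < T')%N by move=> eT; rewrite eT in T_ge1.
split=> [fits | unfit]; last first.
  exact: (act_Phi_lam_unfit v_dval act_lin dvd_valK val_lam dimL p_gt1 b_coprime
           Psi_lam pi_neq0 val_pi h s_word unfit).
have [y [y_unit hcong]] := act_Phi_lam_fit v_dval act_lin dvd_valK val_lam dimL p_gt1
  b_coprime Psi_lam pi_neq0 val_pi lam_ratio h s_word fits.
have [lam0 vlam] := val_lam H.
have [Phi_lam0 val_Phi] := congT_unit_val v_dval T_pos (expfz_neq0 _ pi_neq0) lam0 y_unit hcong.
rewrite (val_pi_exprz v_dval pi_neq0 val_pi) vlam in val_Phi.
split; first by exists y.
by split=> e_val; split=> //; rewrite val_Phi -/e e_val ?mul0r ?add0r // mul1r addrC.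
Qed.
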